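(* Let $G$ be a connected cograph which is $k$-connected, and let $S$ be a minimal vertex separator of $G$ with $|S|=k$, so that $G\setminus S$ has connected components $G_1,\ldots,G_m$ with $m\geq 2$. Then every vertex $x\in S$ is adjacent to every vertex of $V(G)\setminus S$.
   Context: A cograph is a graph that can be built from single vertices by repeatedly taking disjoint unions and joins; equivalently, a graph with no induced path on four vertices. Graphs are finite, simple, undirected. $G\setminus S$ is the subgraph induced on $V(G)\setminus S$. A vertex separator of a connected graph $G$ is a set $S\subset V(G)$ such that $G\setminus S$ is disconnected; it is minimal if no proper subset of $S$ is a vertex separator; a minimum vertex separator is a minimal vertex separator of least size. The paper calls $G$ $k$-connected if there exists a minimum vertex separator of size $k$. *)

From mathcomp Require Import all_boot.
Set Implicit Arguments. Unset Strict Implicit. Unset Printing Implicit Defensive.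

Definition simple_graph (T : finType) (e : rel T) : Prop :=
  symmetric e /\ irreflexive e.

Definition induced_rel (T : finType) (e : rel T) (A : {set T}) : rel T :=
  [rel x y | [&& e x y, x \in A & y \in A]].

Definition connected_on (T : finType) (e : rel T) (A : {set T}) : Prop :=
  forall x y, x \in A -> y \in A -> connect (induced_rel e A) x y.

Definition connected_graph (T : finType) (e : rel T) : Prop :=
  connected_on e [set: T].

Definition is_separator (T : finType) (e : rel T) (S : {set T}) : Prop :=
  exists x y, [/\ x \notin S, y \notin S & ~~ connect (induced_rel e (~: S)) x y].

Definition minimal_separator (T : finType) (e : rel T) (S : {set T}) : Prop :=
  is_separator e S /\ forall S' : {set T}, S' \proper S -> ~ is_separator e S'.

Definition minimum_separator (T : finType) (e : rel T) (S : {set T}) : Prop :=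
  minimal_separator e S /\
  forall S' : {set T}, minimal_separator e S' -> #|S| <= #|S'|.

(* the paper's "k-connected": there exists a minimum vertex separator of size k *)
Definition k_connected (T : finType) (e : rel T) (k : nat) : Prop :=
  exists S, minimum_separator e S /\ #|S| = k.

Definition cograph (T : finType) (e : rel T) : Prop :=
  ~ exists a b c d : T,
      [/\ e a b, e b c, e c d & [/\ ~~ e a c, ~~ e b d & ~~ e a d]].

From mathcomp Require Import all_boot.

Set Implicit Arguments.
Unset Strict Implicit.
Unset Printing Implicit Defensive.

(* Minimality of S makes G \ (S - x) connected for every x in S, so x has a
   neighbour in every component of G \ S, and also outside any given one.
   If x missed a vertex y outside S, then along a path inside the component
   C of y from y to a neighbour of x there would be an edge t t' with t not
   adjacent to x and t' adjacent to x; with a neighbour z of x outside C,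
   t - t' - x - z would be an induced P4. *)

Lemma connect_crossing_edge (T : finType) (r : rel T) (p : pred T) y u :
  connect r y u -> ~~ p y -> p u ->
  exists t t', [/\ connect r y t, r t t', ~~ p t & p t'].
Proof.
move=> /connectP [s r_s ->]; elim: s y r_s => [|t s IHs] y /=; first by move=> _ /negP.
case/andP=> r_yt r_s npy; case: (boolP (p t)) => [pt _|npt /(IHs t r_s npt)].
  by exists y, t; rewrite connect0.
by case=> t1 [t2 [yt1 *]]; exists t1, t2; split=> //; apply: connect_trans (connect1 r_yt) yt1.
Qed.

Section MinimalSeparator.

Variables (T : finType) (e : rel T).
Hypothesis sym_e : symmetric e.

Lemma induced_rel_sym (A : {set T}) : symmetric (induced_rel e A).
Proof. by move=> a b; rewrite /induced_rel /= sym_e andbA [(b \in A) && _]andbC -andbA. Qed.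

Lemma connect_induced_sym (A : {set T}) : connect_sym (induced_rel e A).
Proof. exact/sym_connect_sym/induced_rel_sym. Qed.

Lemma separator_unreachable (S : {set T}) y :
  is_separator e S -> y \notin S ->
  exists2 q, q \notin S & ~~ connect (induced_rel e (~: S)) y q.
Proof.
case=> [a [b [aS bS nab]]] yS.
case: (boolP (connect (induced_rel e (~: S)) y a)) => ya; last by exists a.
exists b => //; apply: contra nab; apply: connect_trans.
by rewrite connect_induced_sym.
Qed.

Lemma minimal_separator_connected (S : {set T}) x :
  minimal_separator e S -> x \in S -> connected_on e (~: (S :\ x)).
Proof.
case=> _ minS xS u v; rewrite !inE => uS vS; apply/negPn/negP => nuv.
apply: (minS (S :\ x)); last by exists u, v; rewrite !inE.
by apply/properP; split; [exact: subD1set | exists x; rewrite ?inE ?eqxx].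
Qed.

Lemma minimal_separator_neighbor (S : {set T}) x (B : {pred T}) p q :
  minimal_separator e S -> x \in S -> closed (induced_rel e (~: S)) B ->
  p \notin S -> p \in B -> q \notin S -> q \notin B ->
  exists z, [/\ z \notin S, z \in B & e x z].
Proof.
move=> minS xS clB pS pB qS nqB.
case: (boolP [exists z, [&& z \notin S, z \in B & e x z]]).
  by case/existsP=> z /and3P [*]; exists z.
move/existsPn=> noNbr.
pose B' : {pred T} := [pred t | (t \notin S) && (t \in B)].
have clB' : closed (induced_rel e (~: (S :\ x))) B'.
  apply: intro_closed; first exact: connect_induced_sym.
  move=> t t' /and3P [ett' _]; rewrite !inE negb_and negbK => t'S /andP [tS tB].
  have t'x : t' != x.
    by apply: contraNneq (noNbr t) => <-; rewrite tS tB sym_e ett'.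
  have {}t'S : t' \notin S by rewrite (negbTE t'x) in t'S.
  by rewrite t'S -(clB t) // /induced_rel /= ett' !inE tS t'S.
have := minimal_separator_connected minS xS; move/(_ p q).
rewrite !inE !negb_and pS qS !orbT => /(_ isT isT) /(closed_connect clB').
by rewrite !inE pS qS pB (negbTE nqB).
Qed.

End MinimalSeparator.

Theorem lemma2 (T : finType) (e : rel T) (k : nat) (S : {set T}) :
  simple_graph e -> connected_graph e -> cograph e -> k_connected e k ->
  minimal_separator e S -> #|S| = k ->
  forall x y, x \in S -> y \notin S -> e x y.
Proof.
move=> [sym_e _] _ noP4 _ minS _ x y xS yS; apply/negPn/negP => nxy.
pose r := induced_rel e (~: S).
have clC : closed r (connect r y) by apply/connect_closed/connect_induced_sym.
have [q qS nyq] := separator_unreachable sym_e minS.1 yS.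
have [u [_ yu xu]] := minimal_separator_neighbor sym_e minS xS clC yS (connect0 _ _) qS nyq.
have [t [t' [yt r_tt' nxt xt']]] := connect_crossing_edge yu nxy xu.
have /and3P [ett'] := r_tt'; rewrite !inE => tS t'S.
have [z [zS nyz xz]] := minimal_separator_neighbor sym_e minS xS
  (predC_closed clC) qS nyq tS (introT negPn yt).
have nonadj_z v : v \notin S -> connect r y v -> ~~ e v z.
  move=> vS yv; apply: contra nyz => evz.
  by apply: (connect_trans yv (connect1 _)); rewrite /r /induced_rel /= evz !inE vS zS.
apply: noP4; exists t, t', x, z; split; rewrite 1?[e t' x]sym_e //; split.
- by rewrite sym_e.
- exact: nonadj_z t'S (connect_trans yt (connect1 r_tt')).
- exact: nonadj_z tS yt.
Qed.
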